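(* Consider a uniform planar array with $M_x$ antennas along the $x$-axis (spacing $d_x$) and $M_y$ along the $y$-axis (spacing $d_y$), wavelength $\lambda$, and for $\boldsymbol\theta=(\theta_x,\theta_y)$ let $\mathbf{a}(\boldsymbol\theta)\in\mathbb{C}^{M_xM_y}$ have entries $e^{j\frac{2\pi}{\lambda}(d_x m_x\sin\theta_x+d_y m_y\sin\theta_y)}$, $0\le m_x\le M_x-1$, $0\le m_y\le M_y-1$. Let $\boldsymbol\theta_1=(\theta_{x,1},\theta_{y,1})$ and $\boldsymbol\theta_2=(\theta_{x,2},\theta_{y,2})$ be random with $\sin\theta_{x,1}-\sin\theta_{x,2}\sim U[-\alpha_x,\alpha_x]$ and $\sin\theta_{y,1}-\sin\theta_{y,2}\sim U[-\alpha_y,\alpha_y]$ independent of $\sin\theta_{x,1}-\sin\theta_{x,2}$, where $\alpha_x,\alpha_y\in[0,1]$. Then $$\mathbb{E}\left[\mathbf{a}^H(\boldsymbol\theta_1)\mathbf{a}(\boldsymbol\theta_2)\right]=\mu\!\left(\frac{\alpha_xd_x}{\lambda},M_x\right)\mu\!\left(\frac{\alpha_yd_y}{\lambda},M_y\right),$$ $$\operatorname{Var}\left[\mathbf{a}^H(\boldsymbol\theta_1)\mathbf{a}(\boldsymbol\theta_2)\right]=\eta\!\left(\frac{\alpha_xd_x}{\lambda},M_x\right)\eta\!\left(\frac{\alpha_yd_y}{\lambda},M_y\right)-\left[\mu\!\left(\frac{\alpha_xd_x}{\lambda},M_x\right)\mu\!\left(\frac{\alpha_yd_y}{\lambda},M_y\right)\right]^2,$$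 where $\mu(c,N)=\sum_{m=0}^{N-1}\operatorname{sinc}(2\pi mc)$ and $\eta(c,N)=\sum_{m_1=0}^{N-1}\sum_{m_2=0}^{N-1}\operatorname{sinc}(2\pi c(m_1-m_2))$.
   Context: $\operatorname{sinc}(x)=\sin(x)/x$ for $x\neq0$, $\operatorname{sinc}(0)=1$. For a complex random variable $Z$, $\operatorname{Var}[Z]=\mathbb{E}|Z|^2-|\mathbb{E}Z|^2$. A uniform distribution on $[-0,0]$ means the difference is $0$ almost surely. *)

From HB Require Import structures.
From mathcomp Require Import all_boot all_order all_algebra.
From mathcomp Require Import all_classical all_reals all_analysis.
From mathcomp Require Import complex.
Set Implicit Arguments. Unset Strict Implicit. Unset Printing Implicit Defensive.
Import Order.TTheory GRing.Theory Num.Theory.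
Local Open Scope ring_scope.
Local Open Scope complex_scope.
Local Open Scope classical_set_scope.

Section Defs.
Variable R : realType.

Definition sinc (x : R) : R := if x == 0 then 1 else sin x / x.

Definition upa_mu (c : R) (N : nat) : R :=
  \sum_(m < N) sinc (2 * pi * m%:R * c).

Definition upa_eta (c : R) (N : nat) : R :=
  \sum_(m1 < N) \sum_(m2 < N) sinc (2 * pi * c * (m1%:R - m2%:R)).

Definition expj (x : R) : R[i] := (cos x) +i* (sin x).

Definition steer (Mx My : nat) (dx dy lam : R) (th : R * R)
  : {ffun 'I_Mx * 'I_My -> R[i]} :=
  [ffun m : 'I_Mx * 'I_My => expj (2 * pi / lam *
       (dx * (m.1 : nat)%:R * sin th.1 + dy * (m.2 : nat)%:R * sin th.2))].

Definition herm_inner (Mx My : nat) (u v : {ffun 'I_Mx * 'I_My -> R[i]}) : R[i] :=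
  \sum_(m : 'I_Mx * 'I_My) conjc (u m) * v m.

Context d (T : measurableType d) (P : probability T R).

Definition cexpect (Z : T -> R[i]) : R[i] :=
  (fine 'E_P[fun w => complex.Re (Z w)]) +i* (fine 'E_P[fun w => complex.Im (Z w)]).

Definition cvariance (Z : T -> R[i]) : R :=
  fine 'E_P[fun w => complex.Re (Z w) ^+ 2 + complex.Im (Z w) ^+ 2]
  - (complex.Re (cexpect Z) ^+ 2 + complex.Im (cexpect Z) ^+ 2).

(** X ~ U[-a, a] for a >= 0, where U[-0,0] means X = 0 almost surely
    (distribution is the Dirac mass at 0). For a > 0 the law is
    Lebesgue measure restricted to [-a,a] normalised by 2a. *)
Definition centered_uniform (X : T -> R) (a : R) : Prop :=
  measurable_fun setT X /\
  forall A : set R, measurable A ->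
    P (X @^-1` A) =
      if a == 0 then \d_(0:R) A
      else (lebesgue_measure (A `&` [set x : R | (- a <= x <= a)%R]) * ((2 * a)^-1)%:E)%E.

Definition indep_rv (X Y : T -> R) : Prop :=
  forall A B : set R, measurable A -> measurable B ->
    P (X @^-1` A `&` Y @^-1` B) = (P (X @^-1` A) * P (Y @^-1` B))%E.

End Defs.

(* Write X := sin thx1 - sin thx2 and Y := sin thy1 - sin thy2.  The phase
   of a^H(theta1) a(theta2) at antenna (i, j) is k_i X + l_j Y, so its real
   and imaginary parts are sums of cos and sin of such phases, and
   |a^H a|^2 = (sum cos)^2 + (sum sin)^2 is a double sum of cosines of phase
   differences.  By independence E cos(kX + lY) = E cos(kX) E cos(lY)
   - E sin(kX) E sin(lY), and for X uniform on [-a, a] the fundamental theorem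
   of calculus gives E cos(kX) = sinc(k a) and E sin(kX) = 0.  The resulting
   sums over the product index set 'I_Mx * 'I_My factor into mu * mu and
   eta * eta. *)

From HB Require Import structures.
From mathcomp Require Import all_boot all_order all_algebra.
From mathcomp Require Import all_classical all_reals all_analysis.
From mathcomp Require Import complex.
From mathcomp Require Import measurable_realfun ring lra.
Set Implicit Arguments. Unset Strict Implicit. Unset Printing Implicit Defensive.
Import Order.TTheory GRing.Theory Num.Theory.
Import numFieldTopology.Exports.
Local Open Scope ring_scope.
Local Open Scope classical_set_scope.

Lemma sum_pair_mul (R : comPzSemiRingType) (I J : finType) (F : I -> R) (G : J -> R) :
  \sum_(m : I * J) F m.1 * G m.2 = (\sum_i F i) * (\sum_j G j).
Proof. by rewrite big_distrlr pair_bigA. Qed.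

Section bounded_expectation.
Context d (T : measurableType d) (R : realType) (P : probability T R).

Lemma bounded_Lfun1 (f : T -> R) (M : R) :
  measurable_fun setT f -> (forall w, `|f w| <= M) -> f \in Lfun P 1.
Proof.
move=> mf fM; apply/Lfun1_integrable/measurable_bounded_integrable => //.
  exact: le_lt_trans (probability_le1 P measurableT) (ltry 1).
exists M; split; first exact: num_real.
by move=> x Mx w _; exact: le_trans (fM w) (ltW Mx).
Qed.

Lemma bounded_mul_Lfun1 (f g : T -> R) (M N : R) :
  measurable_fun setT f -> measurable_fun setT g ->
  (forall w, `|f w| <= M) -> (forall w, `|g w| <= N) ->
  (fun w => f w * g w) \in Lfun P 1.
Proof.
move=> mf mg fM gN; apply: (@bounded_Lfun1 _ (M * N)); first exact: measurable_funM.
by move=> w; rewrite normrM ler_pM // (le_trans _ (fM w)).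
Qed.

Lemma expectation_fsum (I : finType) (F : I -> T -> R) :
  (forall i, F i \in Lfun P 1) ->
  ('E_P[fun w => (\sum_i F i w)%R] = \sum_i 'E_P[F i])%E.
Proof.
move=> FL; rewrite -fct_sumE -(big_map F xpredT id) expectation_sum.
  by rewrite big_map.
by move=> _ /mapP[i _ ->].
Qed.

End bounded_expectation.

Section independence.
Context d (T : measurableType d) (R : realType) (P : probability T R).
Variables (X Y : T -> R).
Hypotheses (mX : measurable_fun setT X) (mY : measurable_fun setT Y).
Hypothesis XY : indep_rv P X Y.
Local Open Scope ereal_scope.

Lemma expectation_indep_ge0 (g h : R -> R) :
  measurable_fun setT g -> measurable_fun setT h ->
  (forall x, 0 <= g x)%R -> (forall x, 0 <= h x)%R ->
  'E_P[fun w => (g (X w) * h (Y w))%R] = 'E_P[fun w => g (X w)] * 'E_P[fun w => h (Y w)].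
Proof.
move=> mg mh g0 h0; rewrite unlock.
pose XR : {mfun T >-> R} := HB.pack X (isMeasurableFun.Build _ _ _ _ _ mX).
pose YR : {mfun T >-> R} := HB.pack Y (isMeasurableFun.Build _ _ _ _ _ mY).
have mXY : measurable_fun setT (fun w => (X w, Y w)) by exact: measurable_fun_pair.
pose XYR : {mfun T >-> (R * R)%type} := HB.pack (fun w => (X w, Y w))
  (isMeasurableFun.Build _ _ _ _ _ mXY).
pose F z := (g z.1 * h z.2)%R%:E.
have mF : measurable_fun setT F.
  apply/measurable_EFinP/measurable_funM.
    exact: measurableT_comp mg measurable_fst.
  exact: measurableT_comp mh measurable_snd.
have F0 z : 0 <= F z by rewrite lee_fin mulr_ge0.
have joint_law : \int[distribution P XYR]_z F z =
    \int[distribution P XR \x distribution P YR]_z F z.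
  apply: eq_measure_integral => A mA _ /=.
  by apply/esym/product_measure_unique => // A1 B1 mA1 mB1; exact: XY.
rewrite -[LHS](ge0_integral_distribution XYR mF F0) joint_law fubini_tonelli1 //.
have inner x : \int[distribution P YR]_y F (x, y) =
    (g x)%:E * \int[distribution P YR]_y (h y)%:E.
  under eq_integral do rewrite /F /= EFinM.
  apply: ge0_integralZl; rewrite ?lee_fin //; first exact/measurable_EFinP.
  by move=> y _; rewrite lee_fin.
rewrite /fubini_F; under eq_integral do rewrite inner.
rewrite ge0_integralZr //; first last.
- by apply: integral_ge0 => y _; rewrite lee_fin.
- by move=> x _; rewrite lee_fin.
- exact/measurable_EFinP.
by rewrite !ge0_integral_distribution //; exact/measurable_EFinP.
Qed.

Lemma expectation_indep_bounded (g h : R -> R) (M N : R) :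
  measurable_fun setT g -> measurable_fun setT h ->
  (forall x, `|g x| <= M)%R -> (forall x, `|h x| <= N)%R ->
  'E_P[fun w => (g (X w) * h (Y w))%R] = 'E_P[fun w => g (X w)] * 'E_P[fun w => h (Y w)].
Proof.
move=> mg mh gM hN.
have gL : (fun w => g (X w)) \in Lfun P 1.
  exact: bounded_Lfun1 (measurableT_comp mg mX) (fun w => gM (X w)).
have hL : (fun w => h (Y w)) \in Lfun P 1.
  exact: bounded_Lfun1 (measurableT_comp mh mY) (fun w => hN (Y w)).
have ghL := bounded_mul_Lfun1 P (measurableT_comp mg mX) (measurableT_comp mh mY)
  (fun w => gM (X w)) (fun w => hN (Y w)).
have gM0 x : (0 <= g x + M)%R.
  by move: (gM x); rewrite ler_norml => /andP[? _]; lra.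
have hN0 x : (0 <= h x + N)%R.
  by move: (hN x); rewrite ler_norml => /andP[? _]; lra.
(* Apply the nonnegative case to [g + M] and [h + N], then expand. *)
have := expectation_indep_ge0 (measurable_funD mg (measurable_cst M))
  (measurable_funD mh (measurable_cst N)) gM0 hN0.
have -> : (fun w => (g (X w) + M) * (h (Y w) + N))%R =
    (fun w => (g (X w) * h (Y w) + g (X w) * N) + (h (Y w) * M + cst (M * N) w))%R.
  by apply/funext => w; rewrite /cst; ring.
have gNL := Lfun_scale N (lexx 1%R) gL.
have hML := Lfun_scale M (lexx 1%R) hL.
have cL (c : R) : cst c \in Lfun P 1 := Lfun_cst P c 1.
rewrite (expectationD (rpredD ghL gNL) (rpredD hML (cL _))) //.
rewrite (expectationD ghL gNL) (expectationD hML (cL _)).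
rewrite (expectationD gL (cL _)) (expectationD hL (cL _)).
rewrite (expectationZl N gL) (expectationZl M hL) !expectation_cst.
rewrite -(fineK (expectation_fin_num gL)) -(fineK (expectation_fin_num hL)).
rewrite -(fineK (expectation_fin_num ghL)) -!EFinM -!EFinD.
by move=> [uv]; congr EFin; lra.
Qed.
End independence.

Section trigonometric.
Context (R : realType).
Local Notation mu := (@lebesgue_measure R).

Lemma normr_cos_le1 (x : R) : `|cos x| <= 1.
Proof. by rewrite ler_norml cos_geN1 cos_le1. Qed.

Lemma normr_sin_le1 (x : R) : `|sin x| <= 1.
Proof. by rewrite ler_norml sin_geN1 sin_le1. Qed.

Lemma measurable_cos : measurable_fun setT (@cos R).
Proof. by apply: continuous_measurable_fun; exact: continuous_cos. Qed.

Lemma measurable_sin : measurable_fun setT (@sin R).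
Proof. by apply: continuous_measurable_fun; exact: continuous_sin. Qed.

Lemma measurable_cosM (a : R) : measurable_fun setT (fun x : R => cos (a * x)).
Proof. by apply: measurableT_comp => //; exact: measurable_cos. Qed.

Lemma measurable_sinM (a : R) : measurable_fun setT (fun x : R => sin (a * x)).
Proof. by apply: measurableT_comp => //; exact: measurable_sin. Qed.

Lemma continuous_FTC2_is_derive (f F : R -> R) (a b : R) : a < b ->
  {within `[a, b], continuous f} -> (forall x : R, is_derive x (1 : R) F (f x)) ->
  (\int[mu]_(x in `[a, b]) (f x)%:E = (F b - F a)%:E)%E.
Proof.
move=> ab cf dF; rewrite EFinB; apply: continuous_FTC2 => //.
- have cF : continuous F.
    by move=> x; apply/differentiable_continuous/derivable1_diffP; case: (dF x).
  split; first by move=> x _; case: (dF x).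
    exact/cvg_at_right_filter/cF.
  exact/cvg_at_left_filter/cF.
- by move=> x _; rewrite derive1E; exact: derive_val.
Qed.

Lemma integral_cosM_add1 (a b : R) : a != 0 -> 0 < b ->
  (\int[mu]_(x in `[(- b)%R, b]) (cos (a * x) + 1)%:E =
   (2 * sin (a * b) / a + 2 * b)%:E)%E.
Proof.
move=> a0 b0.
have dF (x : R) : is_derive x 1 (fun y => sin (a * y) / a + y) (cos (a * x) + 1).
  by apply: is_derive_eq; rewrite /GRing.scale /=; field.
rewrite (continuous_FTC2_is_derive _ _ dF).
- by rewrite mulrN sinN; congr EFin; ring.
- by rewrite gtrN.
- by apply: derivable_within_continuous => x _; exact: ex_derive.
Qed.

Lemma integral_sinM_add1 (a b : R) : a != 0 -> 0 < b ->
  (\int[mu]_(x in `[(- b)%R, b]) (sin (a * x) + 1)%:E = (2 * b)%:E)%E.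
Proof.
move=> a0 b0.
have dF (x : R) : is_derive x 1 (fun y => - cos (a * y) / a + y) (sin (a * x) + 1).
  by apply: is_derive_eq; rewrite /GRing.scale /=; field.
rewrite (continuous_FTC2_is_derive _ _ dF).
- by rewrite mulrN cosN; congr EFin; ring.
- by rewrite gtrN.
- by apply: derivable_within_continuous => x _; exact: ex_derive.
Qed.

End trigonometric.

Section centered_uniform.
Context d (T : measurableType d) (R : realType) (P : probability T R).
Variables (X : T -> R) (al : R).
Hypotheses (al0 : 0 <= al) (XU : centered_uniform P X al).
Local Open Scope ereal_scope.

Lemma expectation_centered_uniform_ge0 (f : R -> R) :
  measurable_fun setT f -> (forall x, 0 <= f x)%R ->
  'E_P[fun w => f (X w)] = if al == 0%R then (f 0%R)%:E
    else ((2 * al)^-1)%:E * \int[lebesgue_measure]_(x in `[(- al)%R, al]) (f x)%:E.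
Proof.
move: XU => [mX lawX] mf f0; rewrite unlock.
pose XR : {mfun T >-> measurableTypeR R} :=
  HB.pack (X : T -> measurableTypeR R)
    (@isMeasurableFun.Build _ _ T (measurableTypeR R) X mX).
have mEf : measurable_fun setT (EFin \o f) by exact/measurable_EFinP.
rewrite -(ge0_integral_distribution XR mEf) => [|x]; last by rewrite lee_fin.
have [al_eq0|al_neq0] := eqVneq al 0%R.
  rewrite (eq_measure_integral (@dirac _ (measurableTypeR R) 0%R R)) => [|A mA _]; last first.
    by move: (lawX A mA); rewrite al_eq0 eqxx; exact.
  by rewrite integral_dirac // diracT mul1e.
have alal : (- al < al)%R by rewrite gtrN // lt_neqAle eq_sym al_neq0.
rewrite (eq_measure_integral (uniform_prob alal)) => [|A mA _].
  by rewrite integral_uniform // opprK -mulr2n mulr_natl.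
apply: eq_trans (lawX A mA) _; rewrite (negbTE al_neq0) /=.
apply: eq_trans _ (esym (integral_uniform_pdf _ _ A)).
rewrite (eq_integral (fun=> ((al - - al)^-1)%:E)) => [|x]; last first.
  by rewrite inE /= in_itv /= => -[_ xI]; rewrite /uniform_pdf xI.
rewrite integral_cst /=; last exact: measurableI.
by rewrite muleC opprK -mulr2n mulr_natl; congr (_ * lebesgue_measure (A `&` _)).
Qed.

Lemma expectation_cosM_centered_uniform (a : R) :
  'E_P[fun w => cos (a * X w)] = (sinc (a * al))%:E.
Proof.
have [->|a_neq0] := eqVneq a 0%R.
  under eq_fun do rewrite mul0r cos0.
  by rewrite expectation_cst /sinc mul0r eqxx.
have cL : (fun w => cos (a * X w)) \in Lfun P 1.
  exact: bounded_Lfun1 (measurableT_comp (measurable_cosM a) XU.1) (fun w => normr_cos_le1 _).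
(* The uniform law is only integrated against nonnegative functions, hence the shift by 1. *)
have cos_add1_ge0 x : (0 <= cos (a * x) + 1)%R by have := cos_geN1 (a * x); lra.
have := expectation_centered_uniform_ge0
  (measurable_funD (measurable_cosM a) (measurable_cst (1%R : R))) cos_add1_ge0.
rewrite /= expectationD ?expectation_cst //; last exact: Lfun_cst.
rewrite -(fineK (expectation_fin_num cL)) -EFinD.
have [al_eq0 [c1]|al_neq0] := eqVneq al 0%R.
  rewrite mulr0 cos0 in c1.
  by rewrite al_eq0 mulr0 /sinc eqxx; congr EFin; lra.
have al_gt0 : (0 < al)%R by rewrite lt_neqAle eq_sym al_neq0.
rewrite integral_cosM_add1 // -EFinM => -[c1].
rewrite /sinc mulf_eq0 (negbTE a_neq0) (negbTE al_neq0) /=; congr EFin.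
by apply: (addIr 1%R); rewrite c1; field; rewrite a_neq0 al_neq0.
Qed.

Lemma expectation_sinM_centered_uniform (a : R) :
  'E_P[fun w => sin (a * X w)] = 0.
Proof.
have [->|a_neq0] := eqVneq a 0%R.
  under eq_fun do rewrite mul0r sin0.
  by rewrite expectation_cst.
have sL : (fun w => sin (a * X w)) \in Lfun P 1.
  exact: bounded_Lfun1 (measurableT_comp (measurable_sinM a) XU.1) (fun w => normr_sin_le1 _).
have sin_add1_ge0 x : (0 <= sin (a * x) + 1)%R by have := sin_geN1 (a * x); lra.
have := expectation_centered_uniform_ge0
  (measurable_funD (measurable_sinM a) (measurable_cst (1%R : R))) sin_add1_ge0.
rewrite /= expectationD ?expectation_cst //; last exact: Lfun_cst.
rewrite -(fineK (expectation_fin_num sL)) -EFinD.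
have [al_eq0 [s1]|al_neq0] := eqVneq al 0%R.
  by rewrite mulr0 sin0 in s1; congr EFin; lra.
have al_gt0 : (0 < al)%R by rewrite lt_neqAle eq_sym al_neq0.
rewrite integral_sinM_add1 // -EFinM mulVf => [[s1]|]; first by congr EFin; lra.
by rewrite mulf_neq0 // pnatr_eq0.
Qed.

End centered_uniform.

Section independent_centered_uniforms.
Context d (T : measurableType d) (R : realType) (P : probability T R).
Variables (X Y : T -> R) (ax ay : R).
Hypotheses (ax0 : 0 <= ax) (ay0 : 0 <= ay).
Hypotheses (XU : centered_uniform P X ax) (YU : centered_uniform P Y ay).
Hypothesis XY : indep_rv P X Y.
Local Open Scope ereal_scope.

Let mX := XU.1.
Let mY := YU.1.

Let trig_mul_Lfun1 (g h : R -> R) :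
  measurable_fun setT g -> measurable_fun setT h ->
  (forall x, `|g x| <= 1)%R -> (forall x, `|h x| <= 1)%R ->
  (fun w => g (X w) * h (Y w))%R \in Lfun P 1.
Proof.
move=> mg mh g1 h1.
exact: bounded_mul_Lfun1 (measurableT_comp mg mX) (measurableT_comp mh mY)
  (fun w => g1 (X w)) (fun w => h1 (Y w)).
Qed.

Lemma expectation_cosD_indep (a b : R) :
  'E_P[fun w => cos (a * X w + b * Y w)] = (sinc (a * ax) * sinc (b * ay))%:E.
Proof.
under eq_fun do rewrite cosD.
rewrite expectationB; last 2 first.
- exact: trig_mul_Lfun1 (measurable_cosM a) (measurable_cosM b)
    (fun x => normr_cos_le1 _) (fun x => normr_cos_le1 _).
- exact: trig_mul_Lfun1 (measurable_sinM a) (measurable_sinM b)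
    (fun x => normr_sin_le1 _) (fun x => normr_sin_le1 _).
rewrite (expectation_indep_bounded mX mY XY (measurable_cosM a) (measurable_cosM b)
  (fun x => normr_cos_le1 _) (fun x => normr_cos_le1 _)).
rewrite (expectation_indep_bounded mX mY XY (measurable_sinM a) (measurable_sinM b)
  (fun x => normr_sin_le1 _) (fun x => normr_sin_le1 _)).
rewrite (expectation_cosM_centered_uniform ax0 XU) (expectation_cosM_centered_uniform ay0 YU).
by rewrite (expectation_sinM_centered_uniform ax0 XU) mul0e sube0.
Qed.

Lemma expectation_sinD_indep (a b : R) :
  'E_P[fun w => sin (a * X w + b * Y w)] = 0.
Proof.
under eq_fun do rewrite sinD.
rewrite expectationD; last 2 first.
- exact: trig_mul_Lfun1 (measurable_sinM a) (measurable_cosM b)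
    (fun x => normr_sin_le1 _) (fun x => normr_cos_le1 _).
- exact: trig_mul_Lfun1 (measurable_cosM a) (measurable_sinM b)
    (fun x => normr_cos_le1 _) (fun x => normr_sin_le1 _).
rewrite (expectation_indep_bounded mX mY XY (measurable_sinM a) (measurable_cosM b)
  (fun x => normr_sin_le1 _) (fun x => normr_cos_le1 _)).
rewrite (expectation_indep_bounded mX mY XY (measurable_cosM a) (measurable_sinM b)
  (fun x => normr_cos_le1 _) (fun x => normr_sin_le1 _)).
rewrite (expectation_sinM_centered_uniform ax0 XU) (expectation_sinM_centered_uniform ay0 YU).
by rewrite mul0e mule0 adde0.
Qed.

Let trig_Lfun1 (f : R -> R) (a b : R) : measurable_fun setT f ->
  (forall x, `|f x| <= 1)%R -> (fun w => f (a * X w + b * Y w)%R) \in Lfun P 1.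
Proof.
move=> mf f1; apply: bounded_Lfun1 (fun w => f1 _).
apply: measurableT_comp mf _.
by apply: measurable_funD; apply: measurable_funM.
Qed.

Lemma expectation_sum_cosD_indep (I : finType) (a b : I -> R) :
  'E_P[fun w => (\sum_i cos (a i * X w + b i * Y w))%R] =
  (\sum_i sinc (a i * ax) * sinc (b i * ay))%:E.
Proof.
rewrite expectation_fsum => [|i]; last first.
  by apply: trig_Lfun1; [exact: measurable_cos | exact: normr_cos_le1].
under eq_bigr do rewrite expectation_cosD_indep.
by rewrite sumEFin.
Qed.

Lemma expectation_sum_sinD_indep (I : finType) (a b : I -> R) :
  'E_P[fun w => (\sum_i sin (a i * X w + b i * Y w))%R] = 0.
Proof.
rewrite expectation_fsum => [|i]; last first.
  by apply: trig_Lfun1; [exact: measurable_sin | exact: normr_sin_le1].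
by rewrite big1 // => i _; exact: expectation_sinD_indep.
Qed.

Lemma expectation_sum_cosD_prod (I J : finType) (a : I -> R) (b : J -> R) :
  'E_P[fun w => (\sum_(m : I * J) cos (a m.1 * X w + b m.2 * Y w))%R] =
  ((\sum_i sinc (a i * ax)) * (\sum_j sinc (b j * ay)))%:E.
Proof.
by rewrite expectation_sum_cosD_indep -sum_pair_mul.
Qed.

Lemma expectation_sum_cosD_prodB (I J : finType) (a : I -> R) (b : J -> R) :
  'E_P[fun w => (\sum_(m : I * J) \sum_(n : I * J)
      cos ((a m.1 - a n.1) * X w + (b m.2 - b n.2) * Y w))%R] =
  ((\sum_i \sum_i' sinc ((a i - a i') * ax)) *
   (\sum_j \sum_j' sinc ((b j - b j') * ay)))%:E.
Proof.
under eq_fun do rewrite pair_bigA /=.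
rewrite expectation_sum_cosD_indep -sum_pair_mul.
by under [in RHS]eq_bigr do rewrite -sum_pair_mul; rewrite pair_bigA.
Qed.

End independent_centered_uniforms.

Section steering_vector.
Context (R : realType).
Local Open Scope complex_scope.

Definition antenna_phase (d lam : R) (m : nat) : R := 2 * pi / lam * (d * m%:R).

Lemma Re_conjc_expj (u v : R) : complex.Re (conjc (expj u) * expj v) = cos (u - v).
Proof. by rewrite /expj /= cosB; ring. Qed.

Lemma Im_conjc_expj (u v : R) : complex.Im (conjc (expj u) * expj v) = sin (v - u).
Proof. by rewrite /expj /= sinB; ring. Qed.

Lemma Re_herm_inner_steer (Mx My : nat) (dx dy lam : R) (th1 th2 : R * R) :
  complex.Re (herm_inner (steer Mx My dx dy lam th1) (steer Mx My dx dy lam th2)) =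
  \sum_(m : 'I_Mx * 'I_My) cos (antenna_phase dx lam m.1 * (sin th1.1 - sin th2.1) +
                               antenna_phase dy lam m.2 * (sin th1.2 - sin th2.2)).
Proof.
rewrite (raddf_sum (@complex.Re R : Rcomplex R -> R)); apply: eq_bigr => m _.
rewrite !ffunE; apply: eq_trans (Re_conjc_expj _ _) _.
by rewrite /antenna_phase; congr cos; ring.
Qed.

Lemma Im_herm_inner_steer (Mx My : nat) (dx dy lam : R) (th1 th2 : R * R) :
  complex.Im (herm_inner (steer Mx My dx dy lam th1) (steer Mx My dx dy lam th2)) =
  \sum_(m : 'I_Mx * 'I_My) sin (- antenna_phase dx lam m.1 * (sin th1.1 - sin th2.1) +
                               - antenna_phase dy lam m.2 * (sin th1.2 - sin th2.2)).
Proof.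
rewrite (raddf_sum (@complex.Im R : Rcomplex R -> R)); apply: eq_bigr => m _.
rewrite !ffunE; apply: eq_trans (Im_conjc_expj _ _) _.
by rewrite /antenna_phase; congr sin; ring.
Qed.

Lemma sum_sinc_antenna_phase (d lam al : R) (N : nat) :
  \sum_(i < N) sinc (antenna_phase d lam i * al) = upa_mu (al * d / lam) N.
Proof. by apply: eq_bigr => i _; rewrite /antenna_phase; congr sinc; ring. Qed.

Lemma sum_sinc_antenna_phaseB (d lam al : R) (N : nat) :
  \sum_(i < N) \sum_(j < N) sinc ((antenna_phase d lam i - antenna_phase d lam j) * al) =
  upa_eta (al * d / lam) N.
Proof.
apply: eq_bigr => i _; apply: eq_bigr => j _.
by rewrite /antenna_phase; congr sinc; ring.
Qed.

Lemma sqr_sum_cos_add_sqr_sum_sin (I : finType) (phi : I -> R) :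
  (\sum_i cos (phi i)) ^+ 2 + (\sum_i sin (phi i)) ^+ 2 =
  \sum_i \sum_j cos (phi i - phi j).
Proof.
rewrite !expr2 !big_distrlr -big_split; apply: eq_bigr => i _.
by rewrite -big_split; apply: eq_bigr => j _; rewrite cosB.
Qed.

Lemma sqr_Re_add_sqr_Im_herm_inner_steer (Mx My : nat) (dx dy lam : R)
    (th1 th2 : R * R) :
  let z := herm_inner (steer Mx My dx dy lam th1) (steer Mx My dx dy lam th2) in
  complex.Re z ^+ 2 + complex.Im z ^+ 2 =
  \sum_(m : 'I_Mx * 'I_My) \sum_(n : 'I_Mx * 'I_My)
    cos ((antenna_phase dx lam m.1 - antenna_phase dx lam n.1) * (sin th1.1 - sin th2.1) +
         (antenna_phase dy lam m.2 - antenna_phase dy lam n.2) * (sin th1.2 - sin th2.2)).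
Proof.
rewrite /= Re_herm_inner_steer Im_herm_inner_steer.
under [X in _ + X ^+ 2]eq_bigr do rewrite !mulNr -opprD sinN.
rewrite sumrN sqrrN sqr_sum_cos_add_sqr_sum_sin.
by apply: eq_bigr => m _; apply: eq_bigr => n _; congr cos; ring.
Qed.

End steering_vector.

Local Open Scope complex_scope.

Theorem lemma1 (R : realType) (d : measure_display) (T : measurableType d)
  (P : probability T R) (Mx My : nat) (dx dy lam alx aly : R)
  (thx1 thy1 thx2 thy2 : T -> R) :
  0 < dx -> 0 < dy -> 0 < lam ->
  0 <= alx <= 1 -> 0 <= aly <= 1 ->
  measurable_fun setT thx1 -> measurable_fun setT thy1 ->
  measurable_fun setT thx2 -> measurable_fun setT thy2 ->
  centered_uniform P (fun w => sin (thx1 w) - sin (thx2 w)) alx ->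
  centered_uniform P (fun w => sin (thy1 w) - sin (thy2 w)) aly ->
  indep_rv P (fun w => sin (thx1 w) - sin (thx2 w))
             (fun w => sin (thy1 w) - sin (thy2 w)) ->
  let Z := fun w => herm_inner (steer Mx My dx dy lam (thx1 w, thy1 w))
                               (steer Mx My dx dy lam (thx2 w, thy2 w)) in
  cexpect P Z = (upa_mu (alx * dx / lam) Mx * upa_mu (aly * dy / lam) My)%:C /\
  cvariance P Z = upa_eta (alx * dx / lam) Mx * upa_eta (aly * dy / lam) My
                  - (upa_mu (alx * dx / lam) Mx * upa_mu (aly * dy / lam) My) ^+ 2.
Proof.
move=> _ _ _ /andP[ax0 _] /andP[ay0 _] _ _ _ _ XU YU XY Z.
pose kx (i : 'I_Mx) := antenna_phase dx lam i.
pose ky (j : 'I_My) := antenna_phase dy lam j.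
have ERe : ('E_P[fun w => complex.Re (Z w)] =
    (upa_mu (alx * dx / lam) Mx * upa_mu (aly * dy / lam) My)%:E)%E.
  under eq_fun do rewrite Re_herm_inner_steer /=.
  rewrite (expectation_sum_cosD_prod ax0 ay0 XU YU XY kx ky).
  by rewrite !sum_sinc_antenna_phase.
have EIm : ('E_P[fun w => complex.Im (Z w)] = 0)%E.
  under eq_fun do rewrite Im_herm_inner_steer /=.
  exact: (expectation_sum_sinD_indep ax0 ay0 XU YU XY
    (fun m : 'I_Mx * 'I_My => - kx m.1) (fun m : 'I_Mx * 'I_My => - ky m.2)).
have Enorm : ('E_P[fun w => (complex.Re (Z w) ^+ 2 + complex.Im (Z w) ^+ 2)%R] =
    (upa_eta (alx * dx / lam) Mx * upa_eta (aly * dy / lam) My)%:E)%E.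
  under eq_fun do rewrite sqr_Re_add_sqr_Im_herm_inner_steer /=.
  rewrite (expectation_sum_cosD_prodB ax0 ay0 XU YU XY kx ky).
  by rewrite !sum_sinc_antenna_phaseB.
split; first by rewrite /cexpect ERe EIm.
by rewrite /cvariance /cexpect Enorm ERe EIm /= expr0n addr0.
Qed.
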